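(* Let $K$ be a finite set, let $W(x,y)\ge 0$ ($x\neq y\in K$) be transition rates with backward generator $Lf(x)=\sum_{y}W(x,y)[f(y)-f(x)]$, let $\mu$ be any probability distribution on $K$, and let $V,Q:K\to\mathbb{R}$ and $a,b\in\mathbb{R}$. For a twice differentiable function $h:[0,\infty)\to\mathbb{R}$, consider the time-inhomogeneous Markov jump process on $K$ started from $\mu$ at time $0$ with transition rates at time $t$ \[ W_t(x,y)=W(x,y)\,e^{h_t\,(bV(y)-aV(x))}, \] and write $\langle Q(t)\rangle^h_\mu$ for the expectation of $Q(x_t)$ under this process. Then for every $t>0$ and every such $h$, \[ \frac{d}{d\varepsilon}\Big|_{\varepsilon=0}\langle Q(t)\rangle^{\varepsilon h}_\mu=\int_0^t h_s\,R(t,s)\,ds, \] where, for $0<s<t$, \[ R(t,s)= b\,\frac{\partial}{\partial s}\langle V(x_s)Q(x_t)\rangle_\mu - a\,\frac{\partial}{\partial t}\langle V(x_s)Q(x_t)\rangle_\mu + b\Big[\langle V(x_s)\,(LQ)(x_t)\rangle_\mu-\langle (LV)(x_s)\,Q(x_t)\rangle_\mu\Big]. \]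
   Context: $\langle\cdot\rangle_\mu$ denotes expectation for the unperturbed (time-homogeneous) Markov jump process $(x_s)_{s\ge0}$ on $K$ with rates $W$ and initial law $\mu$. Equivalently, $\langle Q(t)\rangle^h_\mu=\langle Q(x_t)\rangle_\mu+\int_0^t h_sR(t,s)\,ds+o(h)$; $R(t,s)$ is called the response function. *)

From Stdlib Require Import Reals List.
Open Scope R_scope.

(* Sum of f over the enumeration l of the finite state space K. *)
Definition sumK {K : Type} (l : list K) (f : K -> R) : R :=
  fold_right (fun x acc => f x + acc) 0 l.

(* Backward generator  (L f)(x) = sum_y W(x,y) [f(y) - f(x)]
   (the y = x term vanishes, so the diagonal of W is irrelevant). *)
Definition gen {K : Type} (l : list K) (W : K -> K -> R) (f : K -> R) (x : K) : R :=
  sumK l (fun y => W x y * (f y - f x)).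

Definition dirac {K : Type} (eqdec : forall x y : K, {x = y} + {x <> y})
  (x : K) : K -> R := fun y => if eqdec x y then 1 else 0.

(* p : R -> K -> R is the one-time marginal law (p t x = Prob(x_t = x)) of
   the (possibly time-inhomogeneous) Markov jump process on K with
   transition rates Wt t x y at time t, started from the law mu at time 0:
   it is the solution of the forward Kolmogorov (master) equation on
   (0, oo), right-continuous at 0 with initial value mu. *)
Definition kolmogorov_forward {K : Type} (l : list K)
  (Wt : R -> K -> K -> R) (mu : K -> R) (p : R -> K -> R) : Prop :=
  (forall x, p 0 x = mu x) /\
  (forall x eps, 0 < eps -> exists delta, 0 < delta /\
      forall r, 0 <= r < delta -> Rabs (p r x - p 0 x) < eps) /\
  (forall t x, 0 < t ->
      derivable_pt_lim (fun r => p r x) t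
        (sumK l (fun y => p t y * Wt t y x - p t x * Wt t x y))).

Definition perturbed_rates {K : Type} (W : K -> K -> R) (V : K -> R)
  (a b : R) (h : R -> R) : R -> K -> K -> R :=
  fun t x y => W x y * exp (h t * (b * V y - a * V x)).

Definition twice_differentiable_nonneg (h : R -> R) : Prop :=
  exists h1 h2 : R -> R, forall s, 0 <= s ->
    derivable_pt_lim h s (h1 s) /\ derivable_pt_lim h1 s (h2 s).

(* Two-time correlation  < F(x_s) G(x_t) >_mu  (s <= t) of the unperturbed
   process, given its transition function P x r y = Prob_x(x_r = y):
   sum_{z,x,y} mu(z) P_s(z,x) F(x) P_{t-s}(x,y) G(y). *)
Definition corr {K : Type} (l : list K) (P : K -> R -> K -> R) (mu : K -> R)
  (F G : K -> R) (s t : R) : R :=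
  sumK l (fun z => mu z *
    sumK l (fun x => P z s x * F x *
      sumK l (fun y => P x (t - s) y * G y))).

(* Write U_r = P_{t-r} Q for the unperturbed backward evolution of the
   observable and pe_eps(r) for the law of the process perturbed with strength
   eps. By Duhamel's formula, d/dr <pe_eps(r), U_r> only sees the deviation of
   the rates, sum_x pe_eps(r,x) sum_y (W_r^eps - W)(x,y) (U_r(y) - U_r(x)).
   Expanding exp to first order, using that pe_eps is Lipschitz in eps, and
   integrating over [0,t] gives <Q(t)>^{eps h} - <Q(t)> = eps I + O(eps^2),
   where I integrates the first-order rate. An algebraic identity shows that this
   rate equals h_s R(t,s), with R built from the derivatives of the two-time
   correlation; the derivative in eps at 0 is therefore int_0^t h_s R(t,s) ds.

   No sign condition on the rates or on
   mu is needed: the estimates only use that the rates are bounded. *)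

From Stdlib Require Import Reals List Lra Psatz.
Open Scope R_scope.

Lemma Rabs_le_inv x y : Rabs x <= y -> -y <= x <= y.
Proof. intros; split_Rabs; lra. Qed.

Lemma continuity_pt_eps f x :
  continuity_pt f x <->
  (forall e, 0 < e -> exists d, 0 < d /\ forall y, Rabs (y - x) < d -> Rabs (f y - f x) < e).
Proof.
  unfold continuity_pt, continue_in, limit1_in, limit_in, D_x, no_cond; simpl; unfold Rdist.
  split.
  - intros H e He. destruct (H e He) as [d [Hd H1]]. exists d; split; auto.
    intros y Hy. destruct (Req_dec y x) as [->|Hne].
    + unfold Rminus; rewrite Rplus_opp_r, Rabs_R0; auto.
    + apply H1; split; auto.
  - intros H e He. destruct (H e He) as [d [Hd H1]]. exists d; split; auto.
    intros y [_ Hy]; apply H1; auto.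
Qed.

Lemma derivable_pt_lim_eq f x l1 l2 :
  derivable_pt_lim f x l1 -> l1 = l2 -> derivable_pt_lim f x l2.
Proof. intros H ->; exact H. Qed.

(* The library's differentiation and continuity rules, restated for lambda-terms
   so that they apply by first-order unification (and hence by automation). *)
Lemma dplus f g x a b : derivable_pt_lim f x a -> derivable_pt_lim g x b ->
  derivable_pt_lim (fun y => f y + g y) x (a + b).
Proof. intros; apply (derivable_pt_lim_plus f g); auto. Qed.
Lemma dminus f g x a b : derivable_pt_lim f x a -> derivable_pt_lim g x b ->
  derivable_pt_lim (fun y => f y - g y) x (a - b).
Proof. intros; apply (derivable_pt_lim_minus f g); auto. Qed.
Lemma dmult f g x a b : derivable_pt_lim f x a -> derivable_pt_lim g x b ->
  derivable_pt_lim (fun y => f y * g y) x (a * g x + f x * b).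
Proof. intros; apply (derivable_pt_lim_mult f g); auto. Qed.
Lemma dconst c x : derivable_pt_lim (fun _ => c) x 0.
Proof. apply (derivable_pt_lim_const c). Qed.
Lemma did x : derivable_pt_lim (fun y => y) x 1.
Proof. apply derivable_pt_lim_id. Qed.
Lemma dcomp f g x a b : derivable_pt_lim g x a -> derivable_pt_lim f (g x) b ->
  derivable_pt_lim (fun y => f (g y)) x (b * a).
Proof. intros; apply (derivable_pt_lim_comp g f); auto. Qed.

Lemma cplus f g x : continuity_pt f x -> continuity_pt g x ->
  continuity_pt (fun y => f y + g y) x.
Proof. intros; apply (continuity_pt_plus f g); auto. Qed.
Lemma cminus f g x : continuity_pt f x -> continuity_pt g x ->
  continuity_pt (fun y => f y - g y) x.
Proof. intros; apply (continuity_pt_minus f g); auto. Qed.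
Lemma cmult f g x : continuity_pt f x -> continuity_pt g x ->
  continuity_pt (fun y => f y * g y) x.
Proof. intros; apply (continuity_pt_mult f g); auto. Qed.
Lemma cconst c x : continuity_pt (fun _ => c) x.
Proof. apply continuity_pt_const; intros ? ?; reflexivity. Qed.
Lemma cid x : continuity_pt (fun y => y) x.
Proof. apply derivable_continuous_pt. exists 1. apply did. Qed.
Lemma ccomp f g x : continuity_pt g x -> continuity_pt f (g x) ->
  continuity_pt (fun y => f (g y)) x.
Proof. intros; apply (continuity_pt_comp g f); auto. Qed.
Lemma dcont f x a : derivable_pt_lim f x a -> continuity_pt f x.
Proof. intros H; apply derivable_continuous_pt; exists a; exact H. Qed.

Lemma cont_affine_neg T x : continuity_pt (fun s => T - s) x.
Proof. apply cminus; [apply cconst | apply cid]. Qed.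

Lemma nonincreasing_of_deriv (f f' g : R -> R) a b : a < b ->
  (forall x, a < x < b -> derivable_pt_lim f x (f' x)) ->
  (forall x, a < x < b -> f' x <= 0) ->
  continuity_pt g a -> continuity_pt g b ->
  (forall x, a <= x <= b -> f x = g x) -> f b <= f a.
Proof.
  intros Hab Hd Hneg Ca Cb Efg.
  assert (Hinner : forall r s, a < r -> r <= s -> s < b -> f s <= f r).
  { intros r s H1 H2 H3. destruct H2 as [H2|H2]; [|subst; lra].
    destruct (MVT_cor2 f f' r s H2) as [c [Hc1 Hc2]].
    - intros c Hc; apply Hd; lra.
    - assert (f' c <= 0) by (apply Hneg; lra). nra. }
  apply Rnot_lt_le; intro Hlt.
  set (e := f b - f a).
  assert (He : 0 < e / 3) by (unfold e; lra).
  destruct (proj1 (continuity_pt_eps g a) Ca _ He) as [da [Hda Ha]].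
  destruct (proj1 (continuity_pt_eps g b) Cb _ He) as [db [Hdb Hb]].
  set (d := Rmin da (Rmin db ((b - a)/2)) / 2).
  pose proof (Rmin_l da (Rmin db ((b - a)/2))).
  pose proof (Rmin_r da (Rmin db ((b - a)/2))).
  pose proof (Rmin_l db ((b - a)/2)). pose proof (Rmin_r db ((b - a)/2)).
  assert (Hm : 0 < Rmin da (Rmin db ((b - a)/2))) by (repeat apply Rmin_pos; lra).
  specialize (Ha (a + d)). specialize (Hb (b - d)).
  rewrite <- !Efg in Ha, Hb by (unfold d; lra).
  assert (Rabs (f (a + d) - f a) < e/3) by (apply Ha; rewrite Rabs_right; unfold d; lra).
  assert (Rabs (f (b - d) - f b) < e/3) by (apply Hb; rewrite Rabs_left; unfold d; lra).
  assert (f (b - d) <= f (a + d)) by (apply Hinner; unfold d; lra).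
  apply Rabs_def2 in H3; apply Rabs_def2 in H4. unfold e in *; lra.
Qed.

Lemma mean_value_ineq (f f' g : R -> R) a b M : a < b ->
  (forall x, a < x < b -> derivable_pt_lim f x (f' x)) ->
  (forall x, a < x < b -> Rabs (f' x) <= M) ->
  continuity_pt g a -> continuity_pt g b ->
  (forall x, a <= x <= b -> f x = g x) -> Rabs (f b - f a) <= M * (b - a).
Proof.
  intros Hab Hd Hb Ca Cb Efg.
  assert (Hlin : forall x, continuity_pt (fun x => M * x) x).
  { intro; apply (continuity_pt_scal id); apply cid. }
  assert (H1 : f b - M * b <= f a - M * a).
  { apply (nonincreasing_of_deriv (fun x => f x - M * x) (fun x => f' x - M * 1)
             (fun x => g x - M * x)); auto.
    - intros x Hx. apply dminus; auto. apply (derivable_pt_lim_scal id). apply did.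
    - intros x Hx. specialize (Hb x Hx). apply Rabs_le_inv in Hb. lra.
    - apply cminus; auto.
    - apply cminus; auto.
    - intros x Hx; rewrite Efg; auto. }
  assert (H2 : - f b - M * b <= - f a - M * a).
  { apply (nonincreasing_of_deriv (fun x => - f x - M * x) (fun x => - f' x - M * 1)
             (fun x => - g x - M * x)); auto.
    - intros x Hx. apply dminus; auto. apply (derivable_pt_lim_opp f). auto.
      apply (derivable_pt_lim_scal id). apply did.
    - intros x Hx. specialize (Hb x Hx). apply Rabs_le_inv in Hb. lra.
    - apply cminus; auto. apply (continuity_pt_opp g); auto.
    - apply cminus; auto. apply (continuity_pt_opp g); auto.
    - intros x Hx; rewrite Efg; auto. }
  apply Rabs_le; lra.
Qed.

Lemma exp_mono x y : x <= y -> exp x <= exp y.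
Proof. intros [H|H]; [left; apply exp_increasing; auto | rewrite H; lra]. Qed.

Lemma gronwall (E E' g : R -> R) c T : 0 < T ->
  (forall x, 0 < x < T -> derivable_pt_lim E x (E' x)) ->
  (forall x, 0 < x < T -> E' x <= c * E x) ->
  (forall x, 0 <= x <= T -> continuity_pt g x) ->
  (forall x, 0 <= x <= T -> E x = g x) ->
  forall s, 0 <= s <= T -> E s <= E 0 * exp (c * s).
Proof.
  intros HT Hd Hb Cg Eg s Hs.
  destruct (Req_dec s 0) as [->|Hs0].
  { rewrite Rmult_0_r, exp_0; lra. }
  set (w := fun y => exp (- (c * y))).
  assert (Hdw : forall x, derivable_pt_lim w x (w x * (- (c * 1)))).
  { intro x. apply (dcomp exp (fun y => - (c * y))).
    - apply (derivable_pt_lim_opp (fun y => c * y)).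
      apply (derivable_pt_lim_scal id). apply did.
    - apply derivable_pt_lim_exp. }
  assert (Hcw : forall x, continuity_pt w x) by (intro x; eapply dcont; apply Hdw).
  assert (Hdecr : E s * w s <= E 0 * w 0).
  { apply (nonincreasing_of_deriv (fun x => E x * w x)
      (fun x => E' x * w x + E x * (w x * (- (c * 1)))) (fun x => g x * w x)); try lra.
    - intros x Hx. apply (dmult E w); [apply Hd; lra | apply Hdw].
    - intros x Hx. pose proof (Hb x ltac:(lra)). pose proof (exp_pos (- (c * x))).
      unfold w; nra.
    - apply cmult; [apply Cg; lra | apply Hcw].
    - apply cmult; [apply Cg; lra | apply Hcw].
    - intros x Hx. rewrite Eg; auto. lra. }
  unfold w in Hdecr. rewrite Rmult_0_r, Ropp_0, exp_0, Rmult_1_r in Hdecr.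
  assert (Hm : exp (- (c * s)) * exp (c * s) = 1)
    by (rewrite <- exp_plus; replace (- (c*s) + c*s) with 0 by ring; apply exp_0).
  pose proof (exp_pos (c * s)).
  apply Rmult_le_compat_r with (r := exp (c * s)) in Hdecr; [|lra].
  rewrite Rmult_assoc, Hm, Rmult_1_r in Hdecr. exact Hdecr.
Qed.

Lemma exp_sub1_bound z : Rabs z <= 1 -> Rabs (exp z - 1) <= 3 * Rabs z.
Proof.
  intros Hz. replace 1 with (exp 0) at 1 by apply exp_0.
  destruct (MVT_abs exp exp 0 z) as [c [Hc Hc2]].
  { intros; apply derivable_pt_lim_exp. }
  rewrite Hc, Rminus_0_r. apply Rmult_le_compat_r; [apply Rabs_pos|].
  rewrite Rabs_right by (left; apply exp_pos).
  apply Rle_trans with (exp 1); [|apply exp_le_3].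
  apply exp_mono. apply Rabs_le_inv in Hz.
  unfold Rmin, Rmax in Hc2; destruct Rle_dec; lra.
Qed.

Lemma exp_taylor1_bound z : Rabs z <= 1 -> Rabs (exp z - 1 - z) <= 3 * (z * z).
Proof.
  intros Hz.
  destruct (MVT_abs (fun y => exp y - 1 - y) (fun y => exp y - 1) 0 z) as [c [Hc Hc2]].
  { intros c _. apply derivable_pt_lim_eq with (exp c - 0 - 1).
    - apply dminus; [apply dminus|]; [apply derivable_pt_lim_exp | apply dconst | apply did].
    - ring. }
  replace (exp z - 1 - z) with ((exp z - 1 - z) - (exp 0 - 1 - 0)) by (rewrite exp_0; ring).
  rewrite Hc, Rminus_0_r.
  assert (Hcz : Rabs c <= Rabs z).
  { unfold Rmin, Rmax in Hc2; destruct Rle_dec; split_Rabs; lra. }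
  pose proof (exp_sub1_bound c ltac:(lra)).
  replace (z * z) with (Rabs z * Rabs z) by (split_Rabs; ring).
  pose proof (Rabs_pos (exp c - 1)). pose proof (Rabs_pos z). nra.
Qed.

Lemma clamp_continuous (f : R -> R) :
  (forall e, 0 < e -> exists d, 0 < d /\ forall r, 0 <= r < d -> Rabs (f r - f 0) < e) ->
  (forall r, 0 < r -> continuity_pt f r) ->
  forall r, continuity_pt (fun r => f (Rmax 0 r)) r.
Proof.
  intros Hr Hc r.
  destruct (Rtotal_order r 0) as [Hn|[->|Hp]].
  - apply continuity_pt_locally_ext with (f := fun _ => f 0) (a := - r).
    + lra.
    + intros y Hy. unfold Rdist in Hy. rewrite Rmax_left; auto. split_Rabs; lra.
    + apply cconst.
  - apply continuity_pt_eps. intros e He. destruct (Hr e He) as [d [Hd H]].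
    exists d; split; auto. intros y Hy. rewrite (Rmax_left 0 0) by lra.
    destruct (Rle_dec 0 y).
    + rewrite Rmax_right by auto. apply H. split_Rabs; lra.
    + rewrite Rmax_left by lra. unfold Rminus; rewrite Rplus_opp_r, Rabs_R0; auto.
  - apply continuity_pt_locally_ext with (f := f) (a := r); auto.
    intros y Hy. unfold Rdist in Hy. rewrite Rmax_right; auto. split_Rabs; lra.
Qed.

Lemma continuous_bounded (f : R -> R) a b : a <= b ->
  (forall x, a <= x <= b -> continuity_pt f x) ->
  exists M, 0 <= M /\ forall x, a <= x <= b -> Rabs (f x) <= M.
Proof.
  intros Hab Hc.
  destruct (continuity_ab_maj f a b Hab Hc) as [m1 [Hm1 _]].
  destruct (continuity_ab_min f a b Hab Hc) as [m2 [Hm2 _]].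
  exists (Rabs (f m1) + Rabs (f m2)). split.
  - pose proof (Rabs_pos (f m1)); pose proof (Rabs_pos (f m2)); lra.
  - intros x Hx. specialize (Hm1 x Hx). specialize (Hm2 x Hx). split_Rabs; lra.
Qed.

Lemma derivable_of_quadratic_remainder (F : R -> R) c d0 M : 0 < d0 -> 0 <= M ->
  (forall eps, Rabs eps <= d0 -> Rabs (F eps - F 0 - eps * c) <= M * (Rabs eps * Rabs eps)) ->
  derivable_pt_lim F 0 c.
Proof.
  intros Hd0 HM HF eta Heta.
  assert (Hpos : 0 < Rmin d0 (eta / (M + 1))).
  { apply Rmin_pos; auto. apply Rdiv_lt_0_compat; lra. }
  exists (mkposreal _ Hpos). intros e He0 Hel. simpl in Hel.
  pose proof (Rmin_l d0 (eta / (M + 1))). pose proof (Rmin_r d0 (eta / (M + 1))).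
  rewrite Rplus_0_l.
  pose proof (HF e ltac:(lra)) as HFe.
  replace ((F e - F 0) / e - c) with ((F e - F 0 - e * c) / e) by (field; auto).
  unfold Rdiv. rewrite Rabs_mult, Rabs_inv.
  assert (Hea : 0 < Rabs e) by (apply Rabs_pos_lt; auto).
  apply Rle_lt_trans with (M * Rabs e).
  { apply Rmult_le_reg_r with (Rabs e); auto. rewrite Rmult_assoc, Rinv_l, Rmult_1_r by lra.
    nra. }
  assert (Rabs e * (M + 1) < eta).
  { apply Rmult_lt_reg_r with (/ (M + 1)). apply Rinv_0_lt_compat; lra.
    rewrite Rmult_assoc, Rinv_r, Rmult_1_r by lra. unfold Rdiv in H0. lra. }
  nra.
Qed.

Lemma sumK_ext {K} (l : list K) f g : (forall x, f x = g x) -> sumK l f = sumK l g.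
Proof. intros H; induction l; simpl; auto. rewrite H, IHl; auto. Qed.
Lemma sumK_plus {K} (l : list K) f g : sumK l (fun x => f x + g x) = sumK l f + sumK l g.
Proof. induction l; simpl; [ring|]. rewrite IHl; ring. Qed.
Lemma sumK_minus {K} (l : list K) f g : sumK l (fun x => f x - g x) = sumK l f - sumK l g.
Proof. induction l; simpl; [ring|]. rewrite IHl; ring. Qed.
Lemma sumK_opp {K} (l : list K) f : sumK l (fun x => - f x) = - sumK l f.
Proof. induction l; simpl; [ring|]. rewrite IHl; ring. Qed.
Lemma sumK_mult_l {K} (l : list K) c f : c * sumK l f = sumK l (fun x => c * f x).
Proof. induction l; simpl; [ring|]. rewrite <- IHl; ring. Qed.
Lemma sumK_mult_r {K} (l : list K) c f : sumK l f * c = sumK l (fun x => f x * c).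
Proof. induction l; simpl; [ring|]. rewrite <- IHl; ring. Qed.
Lemma sumK_zero {K} (l : list K) : sumK l (fun _ => 0) = 0.
Proof. induction l; simpl; auto. rewrite IHl; ring. Qed.
Lemma sumK_const {K} (l : list K) c : sumK l (fun _ => c) = INR (length l) * c.
Proof. induction l; simpl length; [simpl; ring|]. simpl sumK. rewrite IHl, S_INR; ring. Qed.
Lemma sumK_swap {K} (l1 l2 : list K) (F : K -> K -> R) :
  sumK l1 (fun x => sumK l2 (fun y => F x y)) = sumK l2 (fun y => sumK l1 (fun x => F x y)).
Proof.
  induction l1; simpl.
  - symmetry; apply sumK_zero.
  - rewrite IHl1, <- sumK_plus. reflexivity.
Qed.
Lemma sumK_le {K} (l : list K) f g : (forall x, f x <= g x) -> sumK l f <= sumK l g.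
Proof. intros H; induction l; simpl; [lra|]. specialize (H a); lra. Qed.
Lemma sumK_nonneg {K} (l : list K) f : (forall x, 0 <= f x) -> 0 <= sumK l f.
Proof. intros H; induction l; simpl; [lra|]. specialize (H a); lra. Qed.
Lemma sumK_abs {K} (l : list K) f : Rabs (sumK l f) <= sumK l (fun x => Rabs (f x)).
Proof.
  induction l; simpl; [rewrite Rabs_R0; lra|].
  eapply Rle_trans; [apply Rabs_triang|]. lra.
Qed.
Lemma sumK_bound {K} (l : list K) f M : (forall x, Rabs (f x) <= M) ->
  Rabs (sumK l f) <= INR (length l) * M.
Proof.
  intros H. eapply Rle_trans; [apply sumK_abs|]. rewrite <- sumK_const. apply sumK_le; auto.
Qed.
Lemma sumK_term {K} (l : list K) f x : (forall y, 0 <= f y) -> In x l -> f x <= sumK l f.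
Proof.
  intros H Hx; induction l; simpl in *; [tauto|].
  destruct Hx as [->|Hx].
  - pose proof (sumK_nonneg l f H); lra.
  - pose proof (H a); specialize (IHl Hx); lra.
Qed.

Lemma sumK_dirac_notin {K} (eqdec : forall x y : K, {x = y} + {x <> y}) (l : list K) x f :
  ~ In x l -> sumK l (fun y => dirac eqdec x y * f y) = 0.
Proof.
  unfold dirac. intros H; induction l; simpl; auto. destruct (eqdec x a).
  - subst; simpl in H; tauto.
  - rewrite IHl; [ring|]. simpl in H; tauto.
Qed.
Lemma sumK_dirac_l {K} (eqdec : forall x y : K, {x = y} + {x <> y}) (l : list K) x f :
  NoDup l -> In x l -> sumK l (fun y => dirac eqdec x y * f y) = f x.
Proof.
  intros Hn Hx; induction Hn as [|a l Ha Hn IH]; simpl in *; [tauto|].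
  unfold dirac at 1. destruct (eqdec x a) as [<-|Hxa].
  - rewrite sumK_dirac_notin; auto. ring.
  - destruct Hx as [->|Hx]; [tauto|]. rewrite IH; auto. ring.
Qed.
Lemma sumK_dirac_r {K} (eqdec : forall x y : K, {x = y} + {x <> y}) (l : list K) x f :
  NoDup l -> In x l -> sumK l (fun y => f y * dirac eqdec y x) = f x.
Proof.
  intros Hn Hx. rewrite <- (sumK_dirac_l eqdec l x f Hn Hx). apply sumK_ext. intros y.
  unfold dirac. destruct (eqdec y x), (eqdec x y); subst; try ring; congruence.
Qed.

Lemma deriv_sumK {K} (l : list K) (F : K -> R -> R) F' s :
  (forall x, derivable_pt_lim (F x) s (F' x)) ->
  derivable_pt_lim (fun r => sumK l (fun x => F x r)) s (sumK l F').
Proof.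
  intros H; induction l; simpl; [apply dconst|].
  apply (dplus (F a) (fun r => sumK l (fun x => F x r))); auto.
Qed.
Lemma cont_sumK {K} (l : list K) (F : K -> R -> R) s :
  (forall x, continuity_pt (F x) s) ->
  continuity_pt (fun r => sumK l (fun x => F x r)) s.
Proof.
  intros H; induction l; simpl; [apply cconst|].
  apply (cplus (F a) (fun r => sumK l (fun x => F x r))); auto.
Qed.

Ltac cont_tac :=
  repeat first [ apply cont_sumK; intros ? | apply cminus | apply cplus | apply cmult
               | apply cconst ].
Ltac deriv_tac :=
  repeat first [ apply deriv_sumK; intros ? | apply dminus | apply dplus | apply dmult
               | apply dconst ].

Lemma mat_bound {K} (l : list K) (Hfull : forall x : K, In x l) (M : K -> K -> R) :
  exists C, 0 <= C /\ forall x y, Rabs (M x y) <= C.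
Proof.
  exists (sumK l (fun x => sumK l (fun y => Rabs (M x y)))). split.
  - apply sumK_nonneg; intro; apply sumK_nonneg; intro; apply Rabs_pos.
  - intros x y.
    eapply Rle_trans; [|apply (sumK_term l (fun x => sumK l (fun y => Rabs (M x y))) x)]; auto.
    + apply (sumK_term l (fun y => Rabs (M x y))); auto. intro; apply Rabs_pos.
    + intro; apply sumK_nonneg; intro; apply Rabs_pos.
Qed.

Lemma sum2_bound {K} (l : list K) (A : K -> R) (B : K -> K -> R) MA MB :
  0 <= MA -> (forall x, Rabs (A x) <= MA) -> (forall x y, Rabs (B x y) <= MB) ->
  Rabs (sumK l (fun x => A x * sumK l (fun y => B x y)))
    <= INR (length l) * (MA * (INR (length l) * MB)).
Proof.
  intros HMA HA HB. apply sumK_bound. intro x. rewrite Rabs_mult.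
  apply Rmult_le_compat; auto using Rabs_pos. apply sumK_bound; auto.
Qed.

Lemma Rabs_mult_le a b A B : Rabs a <= A -> Rabs b <= B -> Rabs (a * b) <= A * B.
Proof. intros Ha Hb. rewrite Rabs_mult. apply Rmult_le_compat; auto using Rabs_pos. Qed.

(* Right-hand side of the master equation: (L_w^* p)(y), the adjoint of [gen]. *)
Definition fwd {K : Type} (l : list K) (w : K -> K -> R) (p : K -> R) (y : K) : R :=
  sumK l (fun v => p v * w v y - p y * w y v).

Lemma duality {K} (l : list K) w p f :
  sumK l (fun y => fwd l w p y * f y) = sumK l (fun x => p x * gen l w f x).
Proof.
  unfold fwd, gen.
  transitivity (sumK l (fun y => sumK l (fun v => p v * w v y * f y)) -
                sumK l (fun y => sumK l (fun v => p y * w y v * f y))).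
  { rewrite <- sumK_minus. apply sumK_ext; intro y. rewrite sumK_mult_r, <- sumK_minus.
    apply sumK_ext; intro v; ring. }
  rewrite sumK_swap, <- sumK_minus. apply sumK_ext; intro x.
  rewrite sumK_mult_l, <- sumK_minus. apply sumK_ext; intro y; ring.
Qed.

Lemma fwd_minus {K} (l : list K) w p q y :
  fwd l w (fun v => p v - q v) y = fwd l w p y - fwd l w q y.
Proof. unfold fwd. rewrite <- sumK_minus. apply sumK_ext; intro; ring. Qed.

Lemma fwd_lin {K} (l : list K) w (c : K -> R) (P : K -> K -> R) y :
  fwd l w (fun v => sumK l (fun z => c z * P z v)) y = sumK l (fun z => c z * fwd l w (P z) y).
Proof.
  unfold fwd.
  transitivity (sumK l (fun v => sumK l (fun z => c z * P z v * w v y - c z * P z y * w y v))).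
  { apply sumK_ext; intro v. rewrite !sumK_mult_r, <- sumK_minus. apply sumK_ext; intro; ring. }
  rewrite sumK_swap. apply sumK_ext; intro z. rewrite sumK_mult_l. apply sumK_ext; intro; ring.
Qed.

Lemma energy_ineq {K} (l : list K) w p C : 0 <= C -> (forall x y, Rabs (w x y) <= C) ->
  sumK l (fun x => p x * fwd l w p x) <= 2 * C * INR (length l) * sumK l (fun x => p x * p x).
Proof.
  intros HC Hw. unfold fwd.
  apply Rle_trans with
    (sumK l (fun x => sumK l (fun y => 3 * C / 2 * (p x * p x) + C / 2 * (p y * p y)))).
  { apply sumK_le; intro x. rewrite sumK_mult_l. apply sumK_le; intro y.
    pose proof (Rabs_le_inv _ _ (Hw y x)). pose proof (Rabs_le_inv _ _ (Hw x y)).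
    assert (0 <= (C - w y x) * ((p x + p y) * (p x + p y)))
      by (apply Rmult_le_pos; [lra | apply Rle_0_sqr]).
    assert (0 <= (C + w y x) * ((p x - p y) * (p x - p y)))
      by (apply Rmult_le_pos; [lra | apply Rle_0_sqr]).
    assert (0 <= (C + w x y) * (p x * p x)) by (apply Rmult_le_pos; [lra | apply Rle_0_sqr]).
    nra. }
  right. rewrite (sumK_ext l _ (fun x => INR (length l) * (3 * C / 2 * (p x * p x))
                                         + sumK l (fun y => C / 2 * (p y * p y))))
    by (intro x; rewrite sumK_plus, sumK_const; reflexivity).
  rewrite sumK_plus, sumK_const, <- !sumK_mult_l. field.
Qed.

Lemma energy_gronwall {K} (l : list K) (d : R -> K -> R) (w : R -> K -> K -> R) C T
  (gd : K -> R -> R) :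
  0 < T -> 0 <= C -> (forall s x y, 0 < s < T -> Rabs (w s x y) <= C) ->
  (forall s x, 0 < s < T -> derivable_pt_lim (fun r => d r x) s (fwd l (w s) (d s) x)) ->
  (forall x s, 0 <= s <= T -> continuity_pt (gd x) s) ->
  (forall x s, 0 <= s <= T -> d s x = gd x s) ->
  forall s, 0 <= s <= T -> sumK l (fun x => d s x * d s x) <=
     sumK l (fun x => d 0 x * d 0 x) * exp (4 * C * INR (length l) * s).
Proof.
  intros HT HC Hw Hd Hc Heq.
  apply (gronwall (fun r => sumK l (fun x => d r x * d r x))
    (fun r => sumK l (fun x => fwd l (w r) (d r) x * d r x + d r x * fwd l (w r) (d r) x))
    (fun r => sumK l (fun x => gd x r * gd x r))); auto.
  - intros s Hs. apply (deriv_sumK l (fun x r => d r x * d r x)). intro x.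
    apply (dmult (fun r => d r x) (fun r => d r x)); apply Hd; auto.
  - intros s Hs.
    rewrite (sumK_ext l _ (fun x => 2 * (d s x * fwd l (w s) (d s) x))) by (intro; ring).
    rewrite <- sumK_mult_l.
    pose proof (energy_ineq l (w s) (d s) C HC (fun x y => Hw s x y Hs)). lra.
  - intros s Hs. apply (cont_sumK l (fun x r => gd x r * gd x r)). intro x.
    apply (cmult (gd x) (gd x)); auto.
  - intros s Hs. apply sumK_ext; intro x. rewrite Heq; auto.
Qed.

Lemma kolmogorov_forward_spec {K} (l : list K) Wt mu p : kolmogorov_forward l Wt mu p ->
  (forall x r, continuity_pt (fun r => p (Rmax 0 r) x) r) /\
  (forall s x, 0 < s -> derivable_pt_lim (fun r => p r x) s (fwd l (Wt s) (p s) x)) /\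
  (forall x, p 0 x = mu x).
Proof.
  intros [H0 [Hc Hd]]. split; [|split; auto].
  intros x. apply (clamp_continuous (fun r => p r x)).
  - exact (Hc x).
  - intros r Hr. eapply dcont. apply (Hd r x Hr).
Qed.

Section ForwardSolutions.
Variables (K : Type) (l : list K).
Hypothesis Hfull : forall x : K, In x l.
Variables (p : R -> K -> R) (w : R -> K -> K -> R).
Hypothesis Hp_deriv :
  forall s x, 0 < s -> derivable_pt_lim (fun r => p r x) s (fwd l (w s) (p s) x).
Hypothesis Hp_cont : forall x r, continuity_pt (fun r => p (Rmax 0 r) x) r.

Lemma forward_energy_bound C T :
  0 < T -> 0 <= C -> (forall s x y, 0 < s < T -> Rabs (w s x y) <= C) ->
  forall s, 0 <= s <= T -> sumK l (fun x => p s x * p s x) <=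
     sumK l (fun x => p 0 x * p 0 x) * exp (4 * C * INR (length l) * T).
Proof.
  intros HT HC Hw s Hs.
  eapply Rle_trans.
  - apply (energy_gronwall l p w C T (fun x r => p (Rmax 0 r) x)); auto.
    + intros; apply Hp_deriv; lra.
    + intros x r Hr. rewrite Rmax_right; auto; lra.
  - apply Rmult_le_compat_l; [apply sumK_nonneg; intro; apply Rle_0_sqr|].
    apply exp_mono. pose proof (pos_INR (length l)).
    apply Rmult_le_compat_l; [|lra]. pose proof (Rmult_le_pos C (INR (length l)) HC H). lra.
Qed.

Lemma forward_solution_bound C T :
  0 < T -> 0 <= C -> (forall s x y, 0 < s < T -> Rabs (w s x y) <= C) ->
  forall s x, 0 <= s <= T -> Rabs (p s x) <=
     1 + sumK l (fun x => p 0 x * p 0 x) * exp (4 * C * INR (length l) * T).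
Proof.
  intros HT HC Hw s x Hs.
  pose proof (sumK_term l (fun y => p s y * p s y) x (fun y => Rle_0_sqr _) (Hfull x)).
  pose proof (forward_energy_bound C T HT HC Hw s Hs). simpl in *. split_Rabs; nra.
Qed.

End ForwardSolutions.

Lemma forward_uniqueness {K} (l : list K) (Hfull : forall x : K, In x l)
  (W : K -> K -> R) (d : R -> K -> R) :
  (forall s y, 0 < s -> derivable_pt_lim (fun r => d r y) s (fwd l W (d s) y)) ->
  (forall y r, continuity_pt (fun r => d (Rmax 0 r) y) r) ->
  (forall y, d 0 y = 0) -> forall s y, 0 <= s -> d s y = 0.
Proof.
  intros Hd Hc H0 s y Hs.
  destruct (mat_bound l Hfull W) as [C [HC0 HC]].
  destruct (Req_dec s 0) as [->|Hs0]; auto.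
  pose proof (forward_energy_bound K l d (fun _ => W) Hd Hc C s ltac:(lra) HC0
                (fun _ x y _ => HC x y) s ltac:(lra)) as Hs'.
  rewrite (sumK_ext l (fun x => d 0 x * d 0 x) (fun _ => 0)), sumK_zero, Rmult_0_l in Hs'
    by (intro; rewrite H0; ring).
  pose proof (sumK_term l (fun x => d s x * d s x) y (fun y => Rle_0_sqr _) (Hfull y)).
  simpl in *. nra.
Qed.

Lemma gen_lin {K} (l : list K) W x (P : K -> K -> R) f :
  sumK l (fun y => gen l W (fun w => P w y) x * f y) =
  gen l W (fun z => sumK l (fun y => P z y * f y)) x.
Proof.
  unfold gen.
  transitivity (sumK l (fun y => sumK l (fun w => W x w * (P w y * f y - P x y * f y)))).
  { apply sumK_ext; intro y. rewrite sumK_mult_r. apply sumK_ext; intro; ring. }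
  rewrite sumK_swap. apply sumK_ext; intro w.
  rewrite <- sumK_minus, sumK_mult_l. apply sumK_ext; intro; ring.
Qed.

Lemma fwd_gen_commutator {K} (l : list K) W (P : K -> K -> R) x y :
  fwd l W (fun v => fwd l W (P x) v - gen l W (fun w => P w v) x) y
  = fwd l W (fwd l W (P x)) y - gen l W (fun w => fwd l W (P w) y) x.
Proof.
  rewrite fwd_minus. f_equal.
  unfold fwd, gen.
  transitivity (sumK l (fun v => sumK l (fun w =>
     W x w * ((P w v - P x v) * W v y - (P w y - P x y) * W y v)))).
  { apply sumK_ext; intro v. rewrite !sumK_mult_r, <- sumK_minus.
    apply sumK_ext; intro; ring. }
  rewrite sumK_swap. apply sumK_ext; intro w. rewrite <- sumK_minus, sumK_mult_l.
  apply sumK_ext; intro; ring.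
Qed.

(* On Dirac masses the forward and backward generators agree:
   (L^* delta_x)(y) = (L delta_. y)(x) = W x y - [x = y] sum_w W x w. *)
Lemma fwd_gen_dirac {K} (eqdec : forall x y : K, {x = y} + {x <> y}) (l : list K)
  (Hnodup : NoDup l) (Hfull : forall x : K, In x l) W x y :
  fwd l W (dirac eqdec x) y = gen l W (fun w => dirac eqdec w y) x.
Proof.
  apply Rminus_diag_uniq. unfold fwd, gen.
  rewrite sumK_minus, (sumK_ext l (fun w => W x w * (dirac eqdec w y - dirac eqdec x y))
      (fun w => W x w * dirac eqdec w y - dirac eqdec x y * W x w)) by (intro; ring).
  rewrite sumK_minus, sumK_dirac_l, (sumK_dirac_r eqdec l y (fun w => W x w)) by auto.
  rewrite <- !sumK_mult_l. unfold dirac. destruct (eqdec x y); [subst; ring | ring].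
Qed.

Lemma gen_product {K} (l : list K) W (V U : K -> R) a b c x :
  c * (b * gen l W (fun y => V y * U y) x - a * (V x * gen l W U x) - b * (gen l W V x * U x))
  = sumK l (fun y => W x y * (c * (b * V y - a * V x)) * (U y - U x)).
Proof.
  unfold gen. rewrite !sumK_mult_l, !sumK_mult_r, !sumK_mult_l, <- !sumK_minus, !sumK_mult_l.
  apply sumK_ext; intro y. ring.
Qed.

Lemma rate_expansion {K} (l : list K) (pe p0 : K -> R) (W Wt c : K -> K -> R) (U : K -> R) eps :
  sumK l (fun x => pe x * sumK l (fun y => (Wt x y - W x y) * (U y - U x)))
   - eps * sumK l (fun x => p0 x * sumK l (fun y => W x y * c x y * (U y - U x)))
  = sumK l (fun x => pe x *
      sumK l (fun y => (Wt x y - W x y - W x y * (eps * c x y)) * (U y - U x)))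
   + sumK l (fun x => (pe x - p0 x) * sumK l (fun y => W x y * (eps * c x y) * (U y - U x))).
Proof.
  rewrite sumK_mult_l, <- sumK_minus, <- sumK_plus. apply sumK_ext; intro x.
  rewrite !sumK_mult_l, <- sumK_minus, <- sumK_plus. apply sumK_ext; intro y. ring.
Qed.

Lemma sumK_reassoc {K} (l : list K) (mu : K -> R) (M : K -> K -> R) (A : K -> R) :
  sumK l (fun z => mu z * sumK l (fun x => M z x * A x)) =
  sumK l (fun x => sumK l (fun z => mu z * M z x) * A x).
Proof.
  transitivity (sumK l (fun z => sumK l (fun x => mu z * M z x * A x))).
  { apply sumK_ext; intro z. rewrite sumK_mult_l. apply sumK_ext; intro; ring. }
  rewrite sumK_swap. apply sumK_ext; intro x. rewrite sumK_mult_r. reflexivity.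
Qed.

Section LinearResponse.

Variables (K : Type) (eqdec : forall x y : K, {x = y} + {x <> y}) (l : list K).
Hypotheses (Hnodup : NoDup l) (Hfull : forall x : K, In x l).
Variables (W : K -> K -> R) (P : K -> R -> K -> R).
Hypothesis HP : forall x : K, kolmogorov_forward l (fun _ => W) (dirac eqdec x) (P x).

Lemma P_cont x y r : continuity_pt (fun r => P x (Rmax 0 r) y) r.
Proof. apply (kolmogorov_forward_spec _ _ _ _ (HP x)). Qed.
Lemma P_deriv x s y : 0 < s -> derivable_pt_lim (fun r => P x r y) s (fwd l W (P x s) y).
Proof. intros; apply (kolmogorov_forward_spec _ _ _ _ (HP x)); auto. Qed.
Lemma P_init x y : P x 0 y = dirac eqdec x y.
Proof. apply (kolmogorov_forward_spec _ _ _ _ (HP x)). Qed.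

(* Forward and backward generators commute with the semigroup:
   (L^* P_r(x,.))(y) = (L P_r(.,y))(x). Their difference solves the master
   equation and vanishes at r = 0, hence vanishes identically. *)
Lemma forward_backward_commute x y r :
  0 <= r -> fwd l W (P x r) y = gen l W (fun w => P w r y) x.
Proof.
  intros Hr. apply Rminus_diag_uniq.
  apply (forward_uniqueness l Hfull W
           (fun r y => fwd l W (P x r) y - gen l W (fun w => P w r y) x)); auto.
  - intros s y' Hs. eapply derivable_pt_lim_eq.
    + unfold fwd, gen. deriv_tac; apply P_deriv; auto.
    + cbv beta. refine (eq_trans _ (eq_sym (fwd_gen_commutator l W (fun w v => P w s v) x y'))).
      cbv beta. unfold fwd, gen. f_equal; apply sumK_ext; intro v; ring.
  - intros y' r'. unfold fwd, gen. cont_tac; apply P_cont.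
  - intros y'. apply Rminus_diag_eq.
    replace (fwd l W (P x 0) y') with (fwd l W (dirac eqdec x) y')
      by (unfold fwd; apply sumK_ext; intro; rewrite !P_init; reflexivity).
    replace (gen l W (fun w => P w 0 y') x) with (gen l W (fun w => dirac eqdec w y') x)
      by (unfold gen; apply sumK_ext; intro; rewrite !P_init; reflexivity).
    apply fwd_gen_dirac; auto.
Qed.

Lemma backward_equation x r (f : K -> R) :
  0 < r -> derivable_pt_lim (fun r => sumK l (fun y => P x r y * f y)) r
             (gen l W (fun z => sumK l (fun y => P z r y * f y)) x).
Proof.
  intros Hr. eapply derivable_pt_lim_eq.
  - deriv_tac. apply P_deriv; auto.
  - rewrite <- (gen_lin l W x (fun w y => P w r y) f). apply sumK_ext; intro y.
    rewrite <- forward_backward_commute by lra. ring.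
Qed.

Lemma law_from_kernel mu (p : R -> K -> R) :
  kolmogorov_forward l (fun _ => W) mu p ->
  forall s x, 0 <= s -> p s x = sumK l (fun z => mu z * P z s x).
Proof.
  intros Hp. destruct (kolmogorov_forward_spec _ _ _ _ Hp) as [Hpc [Hpd Hp0]].
  intros s x Hs. apply Rminus_diag_uniq.
  apply (forward_uniqueness l Hfull W (fun r y => p r y - sumK l (fun z => mu z * P z r y)));
    auto.
  - intros s' y Hs'. eapply derivable_pt_lim_eq.
    + apply dminus; [apply Hpd; auto|]. deriv_tac. apply P_deriv; auto.
    + cbv beta. rewrite fwd_minus, (fwd_lin l W mu (fun z v => P z s' v)). f_equal.
      apply sumK_ext; intro; rewrite Rmult_0_l, Rplus_0_l; reflexivity.
  - intros y r. cont_tac; [apply Hpc | apply P_cont].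
  - intros y. rewrite Hp0, (sumK_ext l _ (fun z => mu z * dirac eqdec z y))
      by (intro; rewrite P_init; reflexivity).
    rewrite sumK_dirac_r by auto. ring.
Qed.

Definition evolved (r : R) (f : K -> R) (x : K) : R := sumK l (fun y => P x r y * f y).

Lemma fwd_evolved x r (f : K -> R) :
  0 <= r -> sumK l (fun y => fwd l W (P x r) y * f y) = gen l W (evolved r f) x.
Proof.
  intros Hr. unfold evolved.
  rewrite (sumK_ext l _ (fun y => gen l W (fun w => P w r y) x * f y))
    by (intro; rewrite forward_backward_commute; auto).
  apply (gen_lin l W x (fun w y => P w r y) f).
Qed.

Lemma evolved_gen x r (f : K -> R) :
  0 <= r -> evolved r (gen l W f) x = gen l W (evolved r f) x.
Proof. intros Hr. unfold evolved. rewrite <- duality. apply fwd_evolved; auto. Qed.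

Variables (mu V Q : K -> R) (a b : R) (h : R -> R) (pe : R -> R -> K -> R).

Definition law0 (s : R) (x : K) : R := sumK l (fun z => mu z * P z s x).

Lemma corr_law F G s t :
  corr l P mu F G s t = sumK l (fun x => law0 s x * (F x * evolved (t - s) G x)).
Proof.
  unfold corr, law0, evolved. rewrite <- sumK_reassoc.
  apply sumK_ext; intro z. f_equal. apply sumK_ext; intro x. ring.
Qed.

Definition Wt (eps : R) : R -> K -> K -> R := perturbed_rates W V a b (fun s => eps * h s).

Lemma Wt_sub_W eps r x y :
  Wt eps r x y - W x y = W x y * (exp (eps * (h r * (b * V y - a * V x))) - 1).
Proof. unfold Wt, perturbed_rates. rewrite Rmult_assoc. ring. Qed.

Hypothesis Hpe : forall eps : R, kolmogorov_forward l (Wt eps) mu (pe eps).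

Lemma pe_cont eps x r : continuity_pt (fun r => pe eps (Rmax 0 r) x) r.
Proof. apply (kolmogorov_forward_spec _ _ _ _ (Hpe eps)). Qed.
Lemma pe_deriv eps s x :
  0 < s -> derivable_pt_lim (fun r => pe eps r x) s (fwd l (Wt eps s) (pe eps s) x).
Proof. intros; apply (kolmogorov_forward_spec _ _ _ _ (Hpe eps)); auto. Qed.
Lemma pe_init eps x : pe eps 0 x = mu x.
Proof. apply (kolmogorov_forward_spec _ _ _ _ (Hpe eps)). Qed.

Lemma unperturbed_law s x : 0 <= s -> pe 0 s x = law0 s x.
Proof.
  apply law_from_kernel. destruct (Hpe 0) as [H1 [H2 H3]]. split; [|split]; auto.
  intros s' x' Hs'. eapply derivable_pt_lim_eq; [apply H3; auto|].
  apply sumK_ext; intro y. unfold Wt, perturbed_rates. rewrite !Rmult_0_l, exp_0. ring.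
Qed.

Lemma unperturbed_mean T (f : K -> R) :
  0 <= T -> sumK l (fun x => pe 0 T x * f x) = sumK l (fun x => mu x * evolved T f x).
Proof.
  intros HT. unfold evolved. rewrite sumK_reassoc.
  apply sumK_ext; intro x. rewrite unperturbed_law by auto. reflexivity.
Qed.

(* Duhamel's formula. Along r |-> <pe_eps(r), P_{T-r} f>, the unperturbed part
   of the generator cancels and only the rate deviation Wt - W remains. *)
Definition duhamel_rate (eps T : R) (f : K -> R) (r : R) : R :=
  sumK l (fun x => pe eps r x *
    sumK l (fun y => (Wt eps r x y - W x y) * (evolved (T - r) f y - evolved (T - r) f x))).

Lemma duhamel_deriv eps T (f : K -> R) r : 0 < r < T ->
  derivable_pt_lim (fun r => sumK l (fun x => pe eps r x * evolved (T - r) f x)) r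
    (duhamel_rate eps T f r).
Proof.
  intros Hr. eapply derivable_pt_lim_eq.
  - apply deriv_sumK; intro x. apply dmult; [apply pe_deriv; lra|].
    apply (dcomp (fun rho => evolved rho f x) (fun r => T - r)).
    + apply dminus; [apply dconst | apply did].
    + apply backward_equation; lra.
  - cbv beta. rewrite sumK_plus, duality, <- sumK_plus. unfold duhamel_rate.
    apply sumK_ext; intro x. unfold gen.
    rewrite (sumK_ext l (fun y => (Wt eps r x y - W x y) * _)
               (fun y => Wt eps r x y * (evolved (T - r) f y - evolved (T - r) f x)
                         - W x y * (evolved (T - r) f y - evolved (T - r) f x)))
      by (intro; ring).
    rewrite sumK_minus. unfold evolved. ring.
Qed.

Lemma P_cont_rev T x y r : continuity_pt (fun s => P x (Rmax 0 (T - s)) y) r.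
Proof.
  apply (ccomp (fun r => P x (Rmax 0 r) y) (fun s => T - s));
    [apply cont_affine_neg | apply P_cont].
Qed.

Lemma duhamel_mean_value eps T (f : K -> R) (G G' : R -> R) M : 0 < T ->
  (forall r, 0 < r < T -> derivable_pt_lim G r (G' r)) ->
  continuity_pt G 0 -> continuity_pt G T ->
  (forall r, 0 < r < T -> Rabs (duhamel_rate eps T f r - eps * G' r) <= M) ->
  Rabs ((sumK l (fun x => pe eps T x * f x) - eps * G T) -
        (sumK l (fun x => mu x * evolved T f x) - eps * G 0)) <= M * T.
Proof.
  intros HT HGd HG0 HGT HM.
  assert (E1 : sumK l (fun x => pe eps T x * f x)
               = sumK l (fun x => pe eps T x * evolved (T - T) f x)).
  { apply sumK_ext; intro x. unfold evolved. replace (T - T) with 0 by ring. f_equal.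
    rewrite (sumK_ext l _ (fun y => dirac eqdec x y * f y))
      by (intro; rewrite P_init; reflexivity).
    rewrite sumK_dirac_l; auto. }
  assert (E2 : sumK l (fun x => mu x * evolved T f x)
               = sumK l (fun x => pe eps 0 x * evolved (T - 0) f x)).
  { apply sumK_ext; intro x. rewrite pe_init, Rminus_0_r. reflexivity. }
  set (g := fun r => sumK l (fun x => pe eps (Rmax 0 r) x *
                       sumK l (fun y => P x (Rmax 0 (T - r)) y * f y)) - eps * G r).
  assert (Hg : forall r, continuity_pt G r -> continuity_pt g r).
  { intros r HGr. unfold g. apply cminus; [|apply (continuity_pt_scal G); auto].
    cont_tac; [apply pe_cont | apply P_cont_rev]. }
  rewrite E1, E2. replace (M * T) with (M * (T - 0)) by ring.
  apply (mean_value_ineq (fun r => sumK l (fun x => pe eps r x * evolved (T - r) f x) - eps * G r)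
           (fun r => duhamel_rate eps T f r - eps * G' r) g); auto.
  - intros r Hr. apply dminus; [apply duhamel_deriv; auto|].
    apply (derivable_pt_lim_scal G). auto.
  - intros r Hr. unfold g, evolved. rewrite (Rmax_right 0 r), (Rmax_right 0 (T - r)) by lra.
    reflexivity.
Qed.

Variables (t Z : R).
Hypotheses (Ht : 0 < t) (HZ0 : 0 <= Z).
Hypothesis HZ : forall s x y, 0 <= s <= t -> Rabs (h s * (b * V y - a * V x)) <= Z.

Lemma exponent_small eps r x y : Rabs eps * Z <= 1 -> 0 <= r <= t ->
  Rabs (eps * (h r * (b * V y - a * V x))) <= Rabs eps * Z.
Proof.
  intros He Hr. rewrite Rabs_mult. apply Rmult_le_compat_l; [apply Rabs_pos | auto].
Qed.

Lemma rate_bound eps r x y : Rabs eps * Z <= 1 -> 0 <= r <= t ->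
  Rabs (Wt eps r x y) <= Rabs (W x y) * exp 1.
Proof.
  intros He Hr. unfold Wt, perturbed_rates. rewrite Rabs_mult, (Rabs_right (exp _)) by (left; apply exp_pos).
  apply Rmult_le_compat_l; [apply Rabs_pos|]. apply exp_mono.
  pose proof (exponent_small eps r x y He Hr). rewrite Rmult_assoc. split_Rabs; lra.
Qed.

Lemma rate_dev_bound eps r x y : Rabs eps * Z <= 1 -> 0 <= r <= t ->
  Rabs (Wt eps r x y - W x y) <= Rabs (W x y) * (3 * (Rabs eps * Z)).
Proof.
  intros He Hr. pose proof (exponent_small eps r x y He Hr).
  rewrite Wt_sub_W, Rabs_mult. apply Rmult_le_compat_l; [apply Rabs_pos|].
  eapply Rle_trans; [apply exp_sub1_bound; lra | lra].
Qed.

Lemma rate_dev_taylor eps r x y : Rabs eps * Z <= 1 -> 0 <= r <= t ->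
  Rabs (Wt eps r x y - W x y - W x y * (eps * (h r * (b * V y - a * V x))))
    <= Rabs (W x y) * (3 * ((Rabs eps * Z) * (Rabs eps * Z))).
Proof.
  intros He Hr. pose proof (exponent_small eps r x y He Hr) as Hs.
  set (z := eps * (h r * (b * V y - a * V x))) in *.
  replace (Wt eps r x y - W x y - W x y * z) with (W x y * (exp z - 1 - z))
    by (pose proof (Wt_sub_W eps r x y) as Hd; fold z in Hd; lra).
  rewrite Rabs_mult. apply Rmult_le_compat_l; [apply Rabs_pos|].
  eapply Rle_trans; [apply exp_taylor1_bound; lra|].
  apply Rmult_le_compat_l; [lra|].
  replace (z * z) with (Rabs z * Rabs z) by (split_Rabs; ring).
  apply Rmult_le_compat; auto using Rabs_pos.
Qed.

Lemma kernel_bounded :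
  exists MP, 0 <= MP /\ forall x r y, 0 <= r <= t -> Rabs (P x r y) <= MP.
Proof.
  destruct (mat_bound l Hfull W) as [Wc [HWc0 HWc]].
  set (MP := 1 + 1 * exp (4 * Wc * INR (length l) * t)).
  exists MP. split; [unfold MP; pose proof (exp_pos (4 * Wc * INR (length l) * t)); lra|].
  intros x r y Hr.
  assert (Hnorm : sumK l (fun y => P x 0 y * P x 0 y) = 1).
  { rewrite (sumK_ext l _ (fun y => dirac eqdec x y * dirac eqdec x y))
      by (intro; rewrite P_init; reflexivity).
    rewrite sumK_dirac_l by auto. unfold dirac. destruct (eqdec x x); [ring | congruence]. }
  unfold MP. rewrite <- Hnorm at 2.
  apply (forward_solution_bound K l Hfull (P x) (fun _ => W)); auto.
  - intros; apply P_deriv; auto.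
  - intros; apply P_cont.
Qed.

Lemma perturbed_law_bounded : exists Mpe, 0 <= Mpe /\
  forall eps s x, Rabs eps * Z <= 1 -> 0 <= s <= t -> Rabs (pe eps s x) <= Mpe.
Proof.
  destruct (mat_bound l Hfull W) as [Wc [HWc0 HWc]].
  set (C := Wc * exp 1).
  assert (HC : 0 <= C) by (unfold C; pose proof (exp_pos 1); nra).
  set (Mpe := 1 + sumK l (fun x => mu x * mu x) * exp (4 * C * INR (length l) * t)).
  exists Mpe. split.
  { unfold Mpe. pose proof (exp_pos (4 * C * INR (length l) * t)).
    pose proof (sumK_nonneg l (fun x => mu x * mu x) (fun x => Rle_0_sqr _)). nra. }
  intros eps s x He Hs. unfold Mpe.
  rewrite <- (sumK_ext l (fun x => pe eps 0 x * pe eps 0 x)) by (intro; rewrite pe_init; reflexivity).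
  apply (forward_solution_bound K l Hfull (pe eps) (Wt eps)); auto.
  - intros; apply pe_deriv; auto.
  - intros; apply pe_cont.
  - intros s' x' y' Hs'. eapply Rle_trans; [apply (rate_bound eps s'); auto; lra|].
    unfold C. apply Rmult_le_compat_r; [left; apply exp_pos | apply HWc].
Qed.

Lemma evolved_bounded Mf : 0 <= Mf -> exists Mu, 0 <= Mu /\
  forall f r x, (forall y, Rabs (f y) <= Mf) -> 0 <= r <= t -> Rabs (evolved r f x) <= Mu.
Proof.
  intros HMf. destruct kernel_bounded as [MP [HMP0 HMP]].
  exists (INR (length l) * (MP * Mf)). split.
  { pose proof (pos_INR (length l)). repeat apply Rmult_le_pos; auto. }
  intros f r x Hf Hr. apply sumK_bound. intro y. apply Rabs_mult_le; auto.
Qed.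

Lemma duhamel_rate_bound Mf : 0 <= Mf -> exists M, 0 <= M /\
  forall f eps T r, (forall y, Rabs (f y) <= Mf) -> Rabs eps * Z <= 1 ->
    0 < r < T -> T <= t -> Rabs (duhamel_rate eps T f r) <= M * Rabs eps.
Proof.
  intros HMf.
  destruct (mat_bound l Hfull W) as [Wc [HWc0 HWc]].
  destruct perturbed_law_bounded as [Mpe [HMpe0 HMpe]].
  destruct (evolved_bounded Mf HMf) as [Mu [HMu0 HMu]].
  set (n := INR (length l)). assert (Hn : 0 <= n) by apply pos_INR.
  exists (n * (Mpe * (n * (Wc * (3 * Z) * (2 * Mu))))). split.
  { repeat (apply Rmult_le_pos; try lra; auto). }
  intros f eps T r Hf He Hr HT. pose proof (Rabs_pos eps).
  eapply Rle_trans.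
  - apply (sum2_bound l _ _ Mpe (Wc * (3 * (Rabs eps * Z)) * (2 * Mu))); auto.
    + intro x. apply HMpe; auto; lra.
    + intros x y. apply Rabs_mult_le.
      * eapply Rle_trans; [apply (rate_dev_bound eps r); auto; lra|].
        apply Rmult_le_compat_r; [nra | apply HWc].
      * unfold Rminus at 1. eapply Rle_trans; [apply Rabs_triang|]. rewrite Rabs_Ropp.
        pose proof (HMu f (T - r) y Hf ltac:(lra)). pose proof (HMu f (T - r) x Hf ltac:(lra)).
        lra.
  - right. unfold n. ring.
Qed.

Lemma law_lipschitz : exists Kd, 0 <= Kd /\
  forall eps s x, Rabs eps * Z <= 1 -> 0 <= s <= t ->
    Rabs (pe eps s x - pe 0 s x) <= Kd * Rabs eps.
Proof.
  destruct (duhamel_rate_bound 1 ltac:(lra)) as [M [HM0 HM]].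
  exists (M * t). split; [nra|].
  intros eps s x He Hs. pose proof (Rabs_pos eps).
  destruct (Req_dec s 0) as [->|Hs0].
  { rewrite !pe_init. unfold Rminus; rewrite Rplus_opp_r, Rabs_R0.
    repeat apply Rmult_le_pos; lra. }
  set (f := fun y => dirac eqdec y x).
  assert (Hf : forall y, Rabs (f y) <= 1).
  { intro y; unfold f, dirac; destruct (eqdec y x); rewrite ?Rabs_R1, ?Rabs_R0; lra. }
  pose proof (duhamel_mean_value eps s f (fun _ => 0) (fun _ => 0) (M * Rabs eps)
                ltac:(lra) (fun r _ => dconst 0 r) (cconst 0 0) (cconst 0 s)) as Hmv.
  rewrite <- unperturbed_mean, !(sumK_dirac_r eqdec l x) in Hmv by (auto; lra).
  eapply Rle_trans.
  - replace (pe eps s x - pe 0 s x) with (pe eps s x - eps * 0 - (pe 0 s x - eps * 0)) by ring.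
    apply Hmv. intros r Hr. rewrite Rmult_0_r, Rminus_0_r.
    apply (HM f eps s r Hf He Hr); lra.
  - replace (M * t * Rabs eps) with (M * Rabs eps * t) by ring.
    apply Rmult_le_compat_l; [nra | lra].
Qed.

Definition first_order_rate (r : R) : R :=
  sumK l (fun x => pe 0 r x * sumK l (fun y => W x y * (h r * (b * V y - a * V x)) *
                     (evolved (t - r) Q y - evolved (t - r) Q x))).

Lemma duhamel_second_order : exists M, 0 <= M /\
  forall eps r, Rabs eps * Z <= 1 -> 0 < r < t ->
    Rabs (duhamel_rate eps t Q r - eps * first_order_rate r) <= M * (Rabs eps * Rabs eps).
Proof.
  destruct (mat_bound l Hfull W) as [Wc [HWc0 HWc]].
  destruct (mat_bound l Hfull (fun _ y => Q y)) as [MQ [HMQ0 HMQ]].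
  destruct perturbed_law_bounded as [Mpe [HMpe0 HMpe]].
  destruct law_lipschitz as [Kd [HKd0 HKd]].
  destruct (evolved_bounded MQ HMQ0) as [Mu [HMu0 HMu]].
  set (n := INR (length l)). assert (Hn : 0 <= n) by apply pos_INR.
  exists (n * (Mpe * (n * (Wc * (3 * (Z * Z)) * (2 * Mu))))
          + n * (Kd * (n * (Wc * Z * (2 * Mu))))).
  split; [repeat first [apply Rplus_le_le_0_compat | apply Rmult_le_pos]; lra|].
  intros eps r He Hr. pose proof (Rabs_pos eps).
  unfold duhamel_rate, first_order_rate.
  rewrite (rate_expansion l (pe eps r) (pe 0 r) W (Wt eps r)
             (fun x y => h r * (b * V y - a * V x)) (evolved (t - r) Q)).
  assert (HD : forall x y, Rabs (evolved (t - r) Q y - evolved (t - r) Q x) <= 2 * Mu).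
  { intros x y. unfold Rminus at 1. eapply Rle_trans; [apply Rabs_triang|]. rewrite Rabs_Ropp.
    pose proof (HMu Q (t - r) y (HMQ y) ltac:(lra)).
    pose proof (HMu Q (t - r) x (HMQ x) ltac:(lra)). lra. }
  eapply Rle_trans; [apply Rabs_triang|].
  eapply Rle_trans; [apply Rplus_le_compat|].
  - apply (sum2_bound l _ _ Mpe (Wc * (3 * (Rabs eps * Z * (Rabs eps * Z))) * (2 * Mu))); auto.
    + intro x. apply HMpe; auto; lra.
    + intros x y. apply Rabs_mult_le; auto.
      eapply Rle_trans; [apply (rate_dev_taylor eps r); auto; lra|].
      apply Rmult_le_compat_r; [nra | apply HWc].
  - apply (sum2_bound l _ _ (Kd * Rabs eps) (Wc * (Rabs eps * Z) * (2 * Mu))); auto.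
    + nra.
    + intro x. apply HKd; auto; lra.
    + intros x y. apply Rabs_mult_le; auto. apply Rabs_mult_le; auto.
      apply exponent_small; auto; lra.
  - right. unfold n. ring.
Qed.

(* d/ds and d/dt of <V(x_s) Q(x_t)>_mu. Times are clamped to [0,oo[ so that the
   expressions are continuous in s on all of [0,t]. *)
Definition Ds (s : R) : R :=
  sumK l (fun z => mu z * sumK l (fun x =>
    fwd l W (P z (Rmax 0 s)) x * V x * sumK l (fun y => P x (Rmax 0 (t - s)) y * Q y)
    - P z (Rmax 0 s) x * V x * sumK l (fun y => fwd l W (P x (Rmax 0 (t - s))) y * Q y))).
Definition Dt (s : R) : R :=
  sumK l (fun z => mu z * sumK l (fun x =>
    P z (Rmax 0 s) x * V x * sumK l (fun y => fwd l W (P x (Rmax 0 (t - s))) y * Q y))).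

Lemma corr_deriv_s s : 0 < s < t ->
  derivable_pt_lim (fun s' => corr l P mu V Q s' t) s (Ds s).
Proof.
  intros Hs. unfold corr. eapply derivable_pt_lim_eq.
  - deriv_tac; [apply P_deriv; lra|].
    apply (dcomp (fun r => P _ r _) (fun s' => t - s')).
    + apply dminus; [apply dconst | apply did].
    + apply P_deriv; lra.
  - cbv beta. unfold Ds. rewrite (Rmax_right 0 s), (Rmax_right 0 (t - s)) by lra.
    apply sumK_ext; intro z. rewrite Rmult_0_l, Rplus_0_l. f_equal. apply sumK_ext; intro x.
    rewrite (sumK_ext l (fun y => fwd l W (P x (t - s)) y * (0 - 1) * Q y + P x (t - s) y * 0)
               (fun y => - (fwd l W (P x (t - s)) y * Q y))) by (intro; ring).
    rewrite sumK_opp. ring.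
Qed.

Lemma corr_deriv_t s : 0 < s < t ->
  derivable_pt_lim (fun t' => corr l P mu V Q s t') t (Dt s).
Proof.
  intros Hs. unfold corr. eapply derivable_pt_lim_eq.
  - deriv_tac. apply (dcomp (fun r => P _ r _) (fun t' => t' - s)).
    + apply dminus; [apply did | apply dconst].
    + apply P_deriv; lra.
  - cbv beta. unfold Dt. rewrite (Rmax_right 0 s), (Rmax_right 0 (t - s)) by lra.
    apply sumK_ext; intro z. rewrite Rmult_0_l, Rplus_0_l. f_equal. apply sumK_ext; intro x.
    rewrite (sumK_ext l (fun y => fwd l W (P x (t - s)) y * (1 - 0) * Q y + P x (t - s) y * 0)
               (fun y => fwd l W (P x (t - s)) y * Q y)) by (intro; ring).
    ring.
Qed.

Definition response_integrand (s : R) : R :=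
  h s * (b * Ds s - a * Dt s
         + b * (corr l P mu V (gen l W Q) s t - corr l P mu (gen l W V) Q s t)).

(* R(t,s) h_s is exactly the first-order Duhamel rate: both equal
   sum_x (mu P_s)(x) sum_y W(x,y) h_s (b V(y) - a V(x)) (U(y) - U(x)), U = P_{t-s} Q. *)
Lemma response_integrand_eq s : 0 < s < t -> response_integrand s = first_order_rate s.
Proof.
  intros Hs. set (U := evolved (t - s) Q).
  assert (HDs : Ds s = sumK l (fun x => law0 s x *
                  (gen l W (fun y => V y * U y) x - V x * gen l W U x))).
  { unfold Ds, law0. rewrite (Rmax_right 0 s), (Rmax_right 0 (t - s)) by lra.
    rewrite <- sumK_reassoc. apply sumK_ext; intro z. f_equal.
    transitivity (sumK l (fun x => fwd l W (P z s) x * (V x * U x))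
                  - sumK l (fun x => P z s x * (V x * gen l W U x))).
    { rewrite <- sumK_minus. apply sumK_ext; intro x.
      rewrite fwd_evolved by lra. unfold U, evolved. ring. }
    rewrite duality, <- sumK_minus. apply sumK_ext; intro x. ring. }
  assert (HDt : Dt s = sumK l (fun x => law0 s x * (V x * gen l W U x))).
  { unfold Dt, law0. rewrite (Rmax_right 0 s), (Rmax_right 0 (t - s)) by lra.
    rewrite <- sumK_reassoc. apply sumK_ext; intro z. f_equal. apply sumK_ext; intro x.
    rewrite fwd_evolved by lra. unfold U. ring. }
  assert (HC : corr l P mu V (gen l W Q) s t = sumK l (fun x => law0 s x * (V x * gen l W U x))).
  { rewrite corr_law. apply sumK_ext; intro x. rewrite evolved_gen by lra. reflexivity. }
  unfold response_integrand, first_order_rate.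
  rewrite HDs, HDt, HC, corr_law. fold U.
  transitivity (sumK l (fun x => law0 s x * (h s * (b * gen l W (fun y => V y * U y) x
                  - a * (V x * gen l W U x) - b * (gen l W V x * U x))))).
  { rewrite (sumK_ext l (fun x => law0 s x *
                 (gen l W (fun y => V y * U y) x - V x * gen l W U x))
               (fun x => law0 s x * gen l W (fun y => V y * U y) x
                         - law0 s x * (V x * gen l W U x))) by (intro; ring).
    rewrite (sumK_ext l (fun x => law0 s x * (h s * (b * gen l W (fun y => V y * U y) x
                  - a * (V x * gen l W U x) - b * (gen l W V x * U x))))
               (fun x => h s * b * (law0 s x * gen l W (fun y => V y * U y) x)
                         - h s * a * (law0 s x * (V x * gen l W U x))
                         - h s * b * (law0 s x * (gen l W V x * U x)))) by (intro; ring).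
    rewrite !sumK_minus, <- !sumK_mult_l. ring. }
  apply sumK_ext; intro x. rewrite unperturbed_law, gen_product by lra. reflexivity.
Qed.

Hypothesis Hh_cont : forall s, 0 <= s <= t -> continuity_pt h s.

Definition response_integrand_clamped (s : R) : R :=
  let Pc x r y := P x (Rmax 0 r) y in
  h s * (b * Ds s - a * Dt s
         + b * (corr l Pc mu V (gen l W Q) s t - corr l Pc mu (gen l W V) Q s t)).

Lemma response_integrand_clamped_eq s :
  0 <= s <= t -> response_integrand s = response_integrand_clamped s.
Proof.
  intros Hs. unfold response_integrand, response_integrand_clamped, corr.
  rewrite (Rmax_right 0 s), (Rmax_right 0 (t - s)) by lra. reflexivity.
Qed.

Lemma response_integrand_clamped_cont s :
  0 <= s <= t -> continuity_pt response_integrand_clamped s.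
Proof.
  intros Hs. unfold response_integrand_clamped, Ds, Dt, corr, fwd.
  apply cmult; [apply Hh_cont; auto|]. cont_tac; first [apply P_cont | apply P_cont_rev].
Qed.

Lemma response_integrable : Riemann_integrable response_integrand 0 t.
Proof.
  refine (Riemann_integrable_ext _ _
            (continuity_implies_RiemannInt (Rlt_le _ _ Ht) response_integrand_clamped_cont)).
  intros x Hx. rewrite Rmin_left, Rmax_right in Hx by lra.
  symmetry. apply response_integrand_clamped_eq; auto.
Qed.

Lemma linear_response_expansion (pr : Riemann_integrable response_integrand 0 t) :
  exists d0 M, 0 < d0 /\ 0 <= M /\ forall eps, Rabs eps <= d0 ->
    Rabs (sumK l (fun x => pe eps t x * Q x) - sumK l (fun x => pe 0 t x * Q x)
          - eps * RiemannInt pr) <= M * (Rabs eps * Rabs eps).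
Proof.
  destruct duhamel_second_order as [M [HM0 HM]].
  assert (Ht' : 0 <= t) by lra.
  pose proof (continuity_implies_RiemannInt Ht' response_integrand_clamped_cont) as prc.
  set (Gam := primitive Ht' (FTC_P1 Ht' response_integrand_clamped_cont)).
  assert (Hint : RiemannInt pr = Gam t - Gam 0).
  { rewrite (RiemannInt_P18 pr prc Ht').
    - apply (RiemannInt_P20 Ht' (FTC_P1 Ht' response_integrand_clamped_cont) prc).
    - intros x Hx. apply response_integrand_clamped_eq; lra. }
  assert (HGam : forall x, 0 <= x <= t -> derivable_pt_lim Gam x (response_integrand_clamped x)).
  { intros x Hx. apply RiemannInt_P28; auto. }
  assert (Hd0 : 0 < / (1 + Z)) by (apply Rinv_0_lt_compat; lra).
  exists (/ (1 + Z)), (M * t). split; [auto | split; [nra|]].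
  intros eps He.
  assert (HeZ : Rabs eps * Z <= 1).
  { pose proof (Rabs_pos eps).
    apply Rmult_le_compat_r with (r := 1 + Z) in He; [|lra].
    rewrite Rinv_l in He by lra. nra. }
  rewrite Hint, unperturbed_mean by lra.
  replace (sumK l (fun x => pe eps t x * Q x) - sumK l (fun x => mu x * evolved t Q x)
           - eps * (Gam t - Gam 0))
    with ((sumK l (fun x => pe eps t x * Q x) - eps * Gam t)
          - (sumK l (fun x => mu x * evolved t Q x) - eps * Gam 0)) by ring.
  replace (M * t * (Rabs eps * Rabs eps)) with (M * (Rabs eps * Rabs eps) * t) by ring.
  apply (duhamel_mean_value eps t Q Gam response_integrand_clamped); auto.
  - intros r Hr. apply HGam; lra.
  - eapply dcont; apply HGam; lra.
  - eapply dcont; apply HGam; lra.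
  - intros r Hr. rewrite <- response_integrand_clamped_eq, response_integrand_eq by lra.
    apply HM; auto.
Qed.

End LinearResponse.

Theorem proposition1
  (K : Type) (eqdec : forall x y : K, {x = y} + {x <> y})
  (l : list K) (Hnodup : NoDup l) (Hfull : forall x : K, In x l)
  (W : K -> K -> R) (HW : forall x y : K, x <> y -> 0 <= W x y)
  (mu : K -> R) (Hmu_nonneg : forall x : K, 0 <= mu x) (Hmu_sum : sumK l mu = 1)
  (V Q : K -> R) (a b : R)
  (* transition function of the unperturbed process *)
  (P : K -> R -> K -> R)
  (HP : forall x : K, kolmogorov_forward l (fun _ => W) (dirac eqdec x) (P x))
  (h : R -> R) (Hh : twice_differentiable_nonneg h)
  (* pe eps = one-time law of the process with rates W_t for eps*h, from mu *)
  (pe : R -> R -> K -> R)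
  (Hpe : forall eps : R,
      kolmogorov_forward l (perturbed_rates W V a b (fun s => eps * h s)) mu (pe eps))
  (t : R) (Ht : 0 < t) :
  exists Ds Dt : R -> R,
    (forall s, 0 < s < t ->
       derivable_pt_lim (fun s' => corr l P mu V Q s' t) s (Ds s)) /\
    (forall s, 0 < s < t ->
       derivable_pt_lim (fun t' => corr l P mu V Q s t') t (Dt s)) /\
    exists pr : Riemann_integrable
        (fun s => h s * (b * Ds s - a * Dt s
                         + b * (corr l P mu V (gen l W Q) s t
                                - corr l P mu (gen l W V) Q s t))) 0 t,
      derivable_pt_lim (fun eps => sumK l (fun x => pe eps t x * Q x)) 0
        (RiemannInt pr).
Proof.
  assert (Hh_cont : forall s, 0 <= s <= t -> continuity_pt h s).
  { destruct Hh as [h1 [h2 Hh12]]. intros s Hs. eapply dcont. apply (Hh12 s); lra. }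
  destruct (continuous_bounded h 0 t ltac:(lra) Hh_cont) as [Hb [Hb0 HHb]].
  destruct (mat_bound l Hfull (fun x y => b * V y - a * V x)) as [C [HC0 HC]].
  assert (HZ : forall s x y, 0 <= s <= t -> Rabs (h s * (b * V y - a * V x)) <= Hb * C)
    by (intros; apply Rabs_mult_le; auto).
  exists (Ds K l W P mu V Q t), (Dt K l W P mu V Q t). split; [|split].
  - apply (corr_deriv_s K eqdec l W P HP).
  - apply (corr_deriv_t K eqdec l W P HP).
  - exists (response_integrable K eqdec l W P HP mu V Q a b h t Ht Hh_cont).
    destruct (linear_response_expansion K eqdec l Hnodup Hfull W P HP mu V Q a b h pe Hpe
                t (Hb * C) Ht ltac:(nra) HZ Hh_cont
                (response_integrable K eqdec l W P HP mu V Q a b h t Ht Hh_cont))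
      as [d0 [M [Hd0 [HM0 HM]]]].
    exact (derivable_of_quadratic_remainder _ _ d0 M Hd0 HM0 HM).
Qed.
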